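(* Let $Y$ be a set, $\Lambda$ an index set, and for each $\ell\in\Lambda$ let $\rho_\ell:Y\to Y_\ell$ be a surjective map onto a finite set $Y_\ell$. Let $(X,\mu)$ be a measure space with $\mu(X)<\infty$ and $F:X\to Y$, $x\mapsto F_x$, a map such that each set $\{x\in X\mid \rho_\ell(F_x)=y\}$ is measurable. For each $\ell\in\Lambda$ let $\nu_\ell$ be a probability density on $Y_\ell$ with $\nu_\ell(y)>0$ for all $y$, and let $\mathcal{B}_\ell$ be an orthonormal basis of the space $L^2(Y_\ell)$ of functions on $Y_\ell$ with inner product $\langle f,g\rangle=\sum_y\nu_\ell(y)f(y)\overline{g(y)}$, such that $\mathcal{B}_\ell$ contains the constant function $1$; put $\mathcal{B}_\ell^*=\mathcal{B}_\ell\setminus\{1\}$. For a finite subset $m\subset\Lambda$ let $Y_m=\prod_{\ell\in m}Y_\ell$, $\rho_m=(\rho_\ell)_{\ell\in m}:Y\to Y_m$, and $\mathcal{B}_m^*$ the set of functions $(y_\ell)\mapsto\prod_{\ell\in m}\varphi_\ell(y_\ell)$ with $\varphi_\ell\in\mathcal{B}_\ell^*$ (for $m=\emptyset$, $Y_m$ is a point and $\mathcal{B}_m^*=\{1\}$). Let $\mathcal{L}^*\subset\Lambda$ be finite, let $\mathcal{L}$ be a finite set of finite subsets of $\Lambda$ such that every element of every $m\in\mathcal{L}$ lies in $\mathcal{L}^*$ and $\{\ell\}\in\mathcal{L}$ for every $\ell\in\mathcal{L}^*$, and let $\Delta$ be the smallest non-negative real number such that $$\sum_{m\in\mathcal{L}}\sum_{\varphi\in\mathcal{B}_m^*}\Big|\int_X\alpha(x)\varphi(\rho_m(F_x))\,d\mu(x)\Big|^2\leq\Delta\int_X|\alpha(x)|^2\,d\mu(x)$$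 for every square-integrable $\alpha:X\to\mathbf{C}$. Then for arbitrary subsets $\Omega_\ell\subset Y_\ell$ ($\ell\in\mathcal{L}^*$), the set $S(X,\Omega;\mathcal{L}^* )=\{x\in X\mid \rho_\ell(F_x)\notin\Omega_\ell \text{ for all } \ell\in\mathcal{L}^*\}$ satisfies $$\mu(S(X,\Omega;\mathcal{L}^* ))\leq\Delta H^{-1},\qquad H=\sum_{m\in\mathcal{L}}\prod_{\ell\in m}\frac{\nu_\ell(\Omega_\ell)}{1-\nu_\ell(\Omega_\ell)},$$ where $\nu_\ell(\Omega_\ell)=\sum_{y\in\Omega_\ell}\nu_\ell(y)$. *)

From HB Require Import structures.
From mathcomp Require Import all_boot all_order all_algebra finmap.
From mathcomp Require Import all_classical all_reals all_analysis.
From mathcomp Require Import complex.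

Set Implicit Arguments.
Unset Strict Implicit.
Unset Printing Implicit Defensive.

Import Order.TTheory GRing.Theory Num.Theory.
Local Open Scope ring_scope.

Definition sqnorm (R : realType) (z : R[i]) : R :=
  complex.Re z ^+ 2 + complex.Im z ^+ 2.

Definition cint (R : realType) (d : measure_display) (X : measurableType d)
  (mu : {measure set X -> \bar R}) (f : X -> R[i]) : R[i] :=
  Complex (Rintegral mu setT (fun x => complex.Re (f x)))
          (Rintegral mu setT (fun x => complex.Im (f x))).

Definition sq_integrable (R : realType) (d : measure_display) (X : measurableType d)
  (mu : {measure set X -> \bar R}) (alpha : X -> R[i]) : Prop :=
  [/\ measurable_fun setT (fun x => complex.Re (alpha x)),
      measurable_fun setT (fun x => complex.Im (alpha x)) &
      mu.-integrable setT (fun x => (sqnorm (alpha x))%:E)].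

Definition l2inner (R : realType) (T : finType) (nu : T -> R) (f g : T -> R[i]) : R[i] :=
  \sum_(y : T) Complex (nu y) 0 * f y * (g y)^*.

Definition nu_of (R : realType) (T : finType) (nu : T -> R) (Om : {set T}) : R :=
  \sum_(y in Om) nu y.

Definition sieve_ratio (R : realType) (t : R) : \bar R :=
  if t == 1 then +oo%E else (t / (1 - t))%:E.

(* For l in L*, let p_l = nu_l(Omega_l) and f_l = p_l - 1_{Omega_l} on Y_l: f_l is orthogonal
   to the constants and has squared norm p_l (1 - p_l), so its coefficients c_l on B_l vanish at
   the constant 1 and satisfy Parseval. On the sifted set S every f_l (rho_l (F x)) equals p_l,
   so for m in L, expanding prod_{l in m} f_l in the product basis and integrating against
   alpha = 1_S gives sum_phi C_phi (int alpha phi) = mu(S) prod_{l in m} p_l, where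
   C_phi = prod_l c_l(phi_l) and only phi in B*_m contribute. Cauchy-Schwarz together with
   sum_phi |C_phi|^2 <= prod_{l in m} p_l (1 - p_l) yields
   mu(S)^2 prod_{l in m} p_l / (1 - p_l) <= sum_phi |int alpha phi|^2,
   and summing over m in L and applying the definition of Delta to alpha gives
   mu(S)^2 H <= Delta mu(S). Every function involved factors through the finite vector of
   residues (rho_l (F x))_{l in L*}, so all the integrals are finite sums. *)

From mathcomp Require Import all_boot all_order all_algebra finmap.
From mathcomp Require Import all_classical all_reals all_analysis.
From mathcomp Require Import complex measurable_realfun.
From mathcomp Require Import ring.
Import Order.TTheory GRing.Theory Num.Theory.
Local Open Scope ring_scope.

Section sqnorm.
Context {R : realType}.
Implicit Types z w : R[i].

(* [l2inner] conjugates with [Num.conj], which [conjc_real] only matches up to unfolding. *)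
Lemma conjC_realc (x : R) : (x%:C%C)^* = x%:C%C.
Proof. exact: conjc_real. Qed.

Lemma sqnormE z : (sqnorm z)%:C%C = z * z^*.
Proof.
by case: z => a b; apply/eqP; rewrite eq_complex /sqnorm /=; apply/andP; split; apply/eqP; ring.
Qed.

Lemma sqnorm_ge0 z : 0 <= sqnorm z.
Proof. by case: z => a b; rewrite /sqnorm /= addr_ge0 ?sqr_ge0. Qed.

Lemma sqnormM z w : sqnorm (z * w) = sqnorm z * sqnorm w.
Proof. by case: z => a b; case: w => c e; rewrite /sqnorm /=; ring. Qed.

Lemma sqnorm_prod (I : Type) (r : seq I) (P : pred I) (z : I -> R[i]) :
  sqnorm (\prod_(i <- r | P i) z i) = \prod_(i <- r | P i) sqnorm (z i).
Proof.
apply: (big_morph _ (@sqnormM)).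
by rewrite /sqnorm /= expr1n expr0n addr0.
Qed.

Lemma sqnorm_Re_le z w (k : R) : 2 * k * complex.Re (w * z) - k ^+ 2 * sqnorm w <= sqnorm z.
Proof.
case: z => a b; case: w => c e; rewrite /sqnorm /= -subr_ge0.
have -> : a ^+ 2 + b ^+ 2 - (2 * k * (c * a - e * b) - k ^+ 2 * (c ^+ 2 + e ^+ 2)) =
  (a - k * c) ^+ 2 + (b + k * e) ^+ 2 by ring.
by rewrite addr_ge0 ?sqr_ge0.
Qed.

(* Cauchy-Schwarz, proved by summing [sqnorm_Re_le] with [k = a]. *)
Lemma sqnorm_sum_ge (I : finType) (P : pred I) (C J : I -> R[i]) (a K : R) :
  \sum_(k | P k) sqnorm (C k) <= K ->
  \sum_(k | P k) C k * J k = (a * K)%:C%C ->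
  a ^+ 2 * K <= \sum_(k | P k) sqnorm (J k).
Proof.
move=> CK CJ; apply: le_trans (ler_sum _ (fun k _ => sqnorm_Re_le (J k) (C k) a)).
rewrite sumrB -!mulr_sumr -raddf_sum CJ /=.
have -> : 2 * a * (a * K) = a ^+ 2 * K + a ^+ 2 * K by ring.
by rewrite -addrA lerDl subr_ge0 ler_wpM2l ?sqr_ge0.
Qed.

End sqnorm.

Section orthonormal_basis.
Context {R : realType} {T I : finType}.
Variables (nu : T -> R) (b : I -> T -> R[i]).
Hypothesis b_on : forall i j, l2inner nu (b i) (b j) = (i == j)%:R.
Hypothesis b_span :
  forall h : T -> R[i], exists c : I -> R[i], forall y, h y = \sum_i c i * b i y.

Lemma l2inner_suml (c : I -> R[i]) (g : T -> R[i]) :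
  l2inner nu (fun y => \sum_i c i * b i y) g = \sum_i c i * l2inner nu (b i) g.
Proof.
rewrite /l2inner; under eq_bigr do rewrite mulr_sumr mulr_suml.
rewrite exchange_big; apply: eq_bigr => i _; rewrite mulr_sumr.
by apply: eq_bigr => y _; ring.
Qed.

Lemma basis_expansion (h : T -> R[i]) y : h y = \sum_i l2inner nu h (b i) * b i y.
Proof.
have [c hc] := b_span h.
have -> : h = fun y => \sum_i c i * b i y by apply: funext.
apply: eq_bigr => i _; rewrite l2inner_suml (bigD1 i) //= b_on eqxx mulr1.
by rewrite big1 ?addr0 // => j ji; rewrite b_on (negbTE ji) mulr0.
Qed.

Lemma parseval (h : T -> R[i]) :
  (\sum_i sqnorm (l2inner nu h (b i)))%:C%C = l2inner nu h h.
Proof.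
rewrite rmorph_sum /=; under eq_bigr do rewrite sqnormE.
rewrite {3}(funext (basis_expansion h)) l2inner_suml.
apply: eq_bigr => i _; congr (_ * _).
rewrite /l2inner rmorph_sum; apply: eq_bigr => y _.
by rewrite !rmorphM /= conjCK (conjC_realc (nu y)) mulrAC.
Qed.

End orthonormal_basis.

Section sieve_fun.
Context {R : realType} {T : finType}.
Variable nu : T -> R.
Hypothesis nu_sum1 : \sum_y nu y = 1.

Lemma l2inner_real (g k : T -> R) :
  l2inner nu (fun y => (g y)%:C%C) (fun y => (k y)%:C%C) = (\sum_y nu y * g y * k y)%:C%C.
Proof.
rewrite /l2inner rmorph_sum; apply: eq_bigr => y _.
by rewrite conjC_realc !rmorphM.
Qed.

Lemma sum_mul_indic (Om : {set T}) : \sum_y nu y * (y \in Om)%:R = nu_of nu Om.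
Proof.
rewrite /nu_of [RHS]big_mkcond; apply: eq_bigr => y _.
by case: (y \in Om); rewrite ?mulr1 ?mulr0.
Qed.

Definition sieve_fun (Om : {set T}) (y : T) : R[i] := (nu_of nu Om - (y \in Om)%:R)%:C%C.

Lemma l2inner_sieve_fun1 Om : l2inner nu (sieve_fun Om) (fun _ => 1) = 0.
Proof.
rewrite (l2inner_real _ (fun _ => 1)).
under eq_bigr do rewrite mulr1 mulrBr.
by rewrite sumrB -mulr_suml nu_sum1 mul1r sum_mul_indic subrr.
Qed.

Lemma l2inner_sieve_fun Om :
  l2inner nu (sieve_fun Om) (sieve_fun Om) = (nu_of nu Om * (1 - nu_of nu Om))%:C%C.
Proof.
rewrite l2inner_real; congr (_%:C%C); set p := nu_of nu Om.
transitivity (\sum_y (p ^+ 2 * nu y + (1 - 2 * p) * (nu y * (y \in Om)%:R))).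
  by apply: eq_bigr => y _; case: (y \in Om); rewrite /= ?mulr1 ?mulr0 ?subr0; ring.
by rewrite big_split /= -!mulr_sumr nu_sum1 sum_mul_indic -/p; ring.
Qed.

Context {I : finType}.
Variables (b : I -> T -> R[i]) (i0 : I).
Hypothesis b_on : forall i j, l2inner nu (b i) (b j) = (i == j)%:R.
Hypothesis b_span :
  forall h : T -> R[i], exists c : I -> R[i], forall y, h y = \sum_i c i * b i y.
Hypothesis b_i0 : forall y, b i0 y = 1.
Variable Om : {set T}.

Lemma sieve_coef_i0 : l2inner nu (sieve_fun Om) (b i0) = 0.
Proof. by rewrite (funext b_i0) l2inner_sieve_fun1. Qed.

Lemma sieve_coef_sqnorm :
  \sum_i sqnorm (l2inner nu (sieve_fun Om) (b i)) = nu_of nu Om * (1 - nu_of nu Om).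
Proof. by apply: complexI; rewrite parseval // l2inner_sieve_fun. Qed.

Lemma sieve_coef_expansion y : y \notin Om ->
  \sum_i l2inner nu (sieve_fun Om) (b i) * b i y = (nu_of nu Om)%:C%C.
Proof. by move=> yOm; rewrite -basis_expansion // /sieve_fun (negbTE yOm) subr0. Qed.

End sieve_fun.

Section distr_dffun.
Context {R : comPzSemiRingType} {I : finType} {J : I -> finType}.
Variable j0 : forall i, J i.

(* [j0] is only a default value for untagging. *)
Lemma bigA_distr_dffun (F : forall i, J i -> R) :
  \prod_i \sum_(j : J i) F i j = \sum_(f : {dffun forall i, J i}) \prod_i F i (f i).
Proof.
pose K := {i : I & J i}.
pose untag i (k : K) : J i := tagged_as (Tagged J (j0 i)) k.
have tagK i : cancel (Tagged J) (untag i) by move=> j; rewrite /untag tagged_asE.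
have sum_tagged i : \sum_(j : J i) F i j = \sum_(k : K | tag k == i) F i (untag i k).
  rewrite (reindex_onto (Tagged J) (untag i)) /=.
    by apply: eq_big => [j|j _]; rewrite tagK ?eqxx.
  by case=> i' k /= /eqP Ei; subst i'; rewrite /untag tagged_asE.
under eq_bigr do rewrite sum_tagged.
rewrite bigA_distr_big_dep.
pose tag_fun (f : {dffun forall i, J i}) : {ffun I -> K} := [ffun i => Tagged J (f i)].
pose untag_fun (g : {ffun I -> K}) : {dffun forall i, J i} := [ffun i => untag i (g i)].
rewrite (reindex_onto tag_fun untag_fun) /=; last first.
  move=> g /familyP g_tag; apply/ffunP => i; rewrite !ffunE.
  by have := g_tag i; rewrite unfold_in; case: (g i) => i' k /= /eqP Ei; subst i; rewrite tagK.
apply: eq_big => [f|f _]; last by apply: eq_bigr => i _; rewrite ffunE tagK.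
have -> : untag_fun (tag_fun f) == f by apply/eqP/ffunP => i; rewrite !ffunE tagK.
by rewrite andbT; apply/familyP => i; rewrite ffunE unfold_in /=.
Qed.

Lemma bigA_distr_dffun_neq (F : forall i, J i -> R) :
  (forall i, F i (j0 i) = 0) ->
  \prod_i \sum_(j : J i) F i j =
  \sum_(f : {dffun forall i, J i} | [forall i, f i != j0 i]) \prod_i F i (f i).
Proof.
move=> F_j0; rewrite bigA_distr_dffun [RHS]big_mkcond; apply: eq_bigr => f _.
case: ifPn => // /forallPn [i /negPn /eqP fi].
by rewrite (bigD1 i) //= fi F_j0 mul0r.
Qed.

End distr_dffun.

Section sieve_block.
Context {R : realType} {M D : finType} {I : M -> finType}.
Variables (i0 : forall l, I l) (c : forall l, I l -> R[i]) (p : M -> R).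

Lemma sum_sqnorm_prod_coef :
  (forall l, \sum_i sqnorm (c l i) <= p l * (1 - p l)) ->
  \sum_(phi : {dffun forall l, I l} | [forall l, phi l != i0 l]) sqnorm (\prod_l c l (phi l))
    <= \prod_l p l * \prod_l (1 - p l).
Proof.
move=> c_sqnorm.
apply: (le_trans (y := \sum_(phi : {dffun forall l, I l}) sqnorm (\prod_l c l (phi l)))).
  rewrite [leRHS](bigID (fun phi : {dffun forall l, I l} => [forall l, phi l != i0 l])) /=.
  by rewrite lerDl sumr_ge0 // => *; apply: sqnorm_ge0.
under [leLHS]eq_bigr do rewrite sqnorm_prod.
rewrite -(bigA_distr_dffun i0 (fun l i => sqnorm (c l i))) -big_split /=.
by apply: ler_prod => l _; rewrite c_sqnorm sumr_ge0 // => *; apply: sqnorm_ge0.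
Qed.

Lemma sum_prod_coef_expansion (e : forall l, I l -> D -> R[i]) (a : D -> R) :
  (forall l, c l (i0 l) = 0) ->
  (forall t, a t != 0 -> forall l, \sum_i c l i * e l i t = (p l)%:C%C) ->
  \sum_(phi : {dffun forall l, I l} | [forall l, phi l != i0 l])
     \prod_l c l (phi l) * \sum_t (a t)%:C%C * \prod_l e l (phi l) t =
  ((\sum_t a t) * \prod_l p l)%:C%C.
Proof.
move=> c_i0 expansion; under [LHS]eq_bigr do rewrite mulr_sumr.
rewrite exchange_big /= mulr_suml rmorph_sum; apply: eq_bigr => t _.
have [->|at0] := eqVneq (a t) 0.
  by rewrite mul0r rmorph0 big1 // => phi _; rewrite mul0r mulr0.
transitivity ((a t)%:C%C * \sum_(phi : {dffun forall l, I l} | [forall l, phi l != i0 l])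
                           \prod_l (c l (phi l) * e l (phi l) t)).
  by rewrite mulr_sumr; apply: eq_bigr => phi _; rewrite big_split /=; ring.
rewrite -(bigA_distr_dffun_neq i0 (fun l i => c l i * e l i t)) => [|l]; last first.
  by rewrite c_i0 mul0r.
by rewrite rmorphM rmorph_prod; congr (_ * _); apply: eq_bigr => l _; rewrite expansion.
Qed.

Lemma sieve_block_ineq (e : forall l, I l -> D -> R[i]) (a : D -> R) :
  (forall l, c l (i0 l) = 0) ->
  (forall l, \sum_i sqnorm (c l i) <= p l * (1 - p l)) ->
  (forall l, p l < 1) ->
  (forall t, a t != 0 -> forall l, \sum_i c l i * e l i t = (p l)%:C%C) ->
  (\sum_t a t) ^+ 2 * \prod_l (p l / (1 - p l)) <=
  \sum_(phi : {dffun forall l, I l} | [forall l, phi l != i0 l])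
     sqnorm (\sum_t (a t)%:C%C * \prod_l e l (phi l) t).
Proof.
move=> c_i0 c_sqnorm p_lt1 expansion; set Q := \prod_l (1 - p l).
have Q_gt0 : 0 < Q by apply: prodr_gt0 => l _; rewrite subr_gt0.
have -> : (\sum_t a t) ^+ 2 * \prod_l (p l / (1 - p l)) =
          ((\sum_t a t) / Q) ^+ 2 * (\prod_l p l * Q).
  by rewrite prodf_div -/Q; field; rewrite gt_eqF.
apply: sqnorm_sum_ge; first exact: sum_sqnorm_prod_coef.
by rewrite sum_prod_coef_expansion // mulrCA divfK ?gt_eqF // mulrC.
Qed.

End sieve_block.

Local Open Scope classical_set_scope.

Section finite_valued.
Context {R : realType} {d : measure_display} {X : measurableType d}.
Context {mu : {measure set X -> \bar R}} {D : finType} {h : X -> D}.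
Hypothesis mu_fin : (mu setT < +oo)%E.
Hypothesis h_meas : forall t, measurable [set x | h x = t].

Let fiber t := [set x | h x = t].

Lemma measurable_preimage_fin (A : pred D) : measurable [set x | A (h x)].
Proof.
have -> : [set x | A (h x)] = \bigcup_(t in [set t | A t]) fiber t.
  by apply/seteqP; split => [x Ax|x [t At ht]]; [exists (h x) | rewrite /= ht].
by apply: fin_bigcup_measurable; [apply: finite_finset | move=> t _; apply: h_meas].
Qed.

Lemma fin_num_fiber t : mu (fiber t) \is a fin_num.
Proof.
rewrite ge0_fin_numE // (le_lt_trans _ mu_fin) //.
by apply: le_measure; rewrite ?inE //; apply: h_meas.
Qed.

Lemma comp_fin_indicE (G : D -> R) x : G (h x) = \sum_t G t * \1_(fiber t) x.
Proof.
rewrite (bigD1 (h x)) //= indicE mem_set // mulr1 big1 ?addr0 // => t tx.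
by rewrite indicE memNset ?mulr0 //= => ht; rewrite ht eqxx in tx.
Qed.

Lemma integrable_indic_fiber t : mu.-integrable setT (fun x => (\1_(fiber t) x)%:E).
Proof.
apply/integrableP; split; first exact/measurable_EFinP/measurable_indic/h_meas.
under eq_integral do rewrite gee0_abs ?lee_fin //.
by rewrite integral_indic ?setIT ?ltey_eq ?fin_num_fiber //; apply: h_meas.
Qed.

Lemma EFin_comp_fin_indicE (G : D -> R) x :
  ((G (h x))%:E = \sum_t (G t)%:E * (\1_(fiber t) x)%:E)%E.
Proof. by rewrite comp_fin_indicE -sumEFin; apply: eq_bigr => t _; rewrite EFinM. Qed.

Lemma integrable_comp_fin (G : D -> R) : mu.-integrable setT (EFin \o (fun x => G (h x))).
Proof.
apply: (eq_integrable measurableT (fun x => \sum_t ((G t)%:E * (\1_(fiber t) x)%:E))%E).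
  by move=> x _; rewrite /= EFin_comp_fin_indicE.
apply: (integrable_sum measurableT) => t _.
exact/(integrableZl measurableT)/integrable_indic_fiber.
Qed.

Lemma measurable_comp_fin (G : D -> R) : measurable_fun setT (fun x => G (h x)).
Proof. by have /integrableP[/measurable_EFinP] := integrable_comp_fin G. Qed.

Lemma Rintegral_comp_fin (G : D -> R) :
  Rintegral mu setT (fun x => G (h x)) = \sum_t G t * fine (mu (fiber t)).
Proof.
rewrite /Rintegral; under eq_integral do rewrite EFin_comp_fin_indicE.
rewrite (integral_sum measurableT); last first.
  by move=> t; apply/(integrableZl measurableT)/integrable_indic_fiber.
transitivity (fine (\sum_t (G t * fine (mu (fiber t)))%:E)%E); last by rewrite sumEFin.
congr fine; apply: eq_bigr => t _.
rewrite (integralZl measurableT); last exact: integrable_indic_fiber.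
by rewrite integral_indic ?setIT ?EFinM ?fineK ?fin_num_fiber //; apply: h_meas.
Qed.

Lemma cint_comp_fin (K : D -> R[i]) :
  cint mu (fun x => K (h x)) = \sum_t K t * (fine (mu (fiber t)))%:C%C.
Proof.
rewrite /cint (Rintegral_comp_fin (fun t => complex.Re (K t))).
rewrite (Rintegral_comp_fin (fun t => complex.Im (K t))); apply/eqP; rewrite eq_complex.
rewrite !raddf_sum /=; apply/andP; split; apply/eqP; apply: eq_bigr => t _.
  by case: (K t) => a b /=; ring.
by case: (K t) => a b /=; ring.
Qed.

End finite_valued.

Lemma measurable_ffun_eq d (X : measurableType d) (I : finType) (T : I -> finType)
    (g : forall i, X -> T i) :
  (forall i y, measurable [set x | g i x = y]) ->
  forall t : {dffun forall i, T i}, measurable [set x | [ffun i => g i x] = t].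
Proof.
move=> g_meas t.
have -> : [set x | [ffun i => g i x] = t] = \bigcap_(i in setT) [set x | g i x = t i].
  apply/seteqP; split=> [x <- i _|x gt]; first by rewrite ffunE.
  by apply/ffunP => i; rewrite ffunE; apply: gt.
by apply: fin_bigcap_measurable => //; apply: finite_finset.
Qed.

Local Close Scope classical_set_scope.
Local Open Scope fset_scope.

Lemma nu_of_lt1 {R : realType} {T : finType} {nu : T -> R} {Om : {set T}} {y : T} :
  (forall y, 0 < nu y) -> \sum_y nu y = 1 -> y \notin Om -> nu_of nu Om < 1.
Proof.
move=> nu_gt0 nu_sum1 yOm; rewrite -nu_sum1 /nu_of [ltRHS](bigID (mem Om)) /= ltrDl.
by rewrite (bigD1 y) //= ltr_pwDl // sumr_ge0 // => z _; apply: ltW.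
Qed.

Section sieve.
Context {R : realType} {Y : Type} {Lam : choiceType} {Yl : Lam -> finType}.
Context {rho : forall l, Y -> Yl l} {d : measure_display} {X : measurableType d}.
Context {mu : {measure set X -> \bar R}} {F : X -> Y}.
Hypothesis mu_fin : (mu setT < +oo)%E.
Hypothesis F_meas : forall l y, measurable [set x : X | rho l (F x) = y]%classic.
Variables (Lstar : {fset Lam}) (Omega : forall l, {set Yl l}).

Definition residues (x : X) : {dffun forall l : Lstar, Yl (fsval l)} :=
  [ffun l => rho (fsval l) (F x)].

Definition sifted (t : {dffun forall l : Lstar, Yl (fsval l)}) : bool :=
  [forall l, t l \notin Omega (fsval l)].

Let S := [set x : X | forall l, l \in Lstar -> rho l (F x) \notin Omega l]%classic.

Lemma measurable_residues_eq t : measurable [set x | residues x = t]%classic.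
Proof. by apply: measurable_ffun_eq => l y; apply: F_meas. Qed.

Lemma sifted_residues x : S x <-> sifted (residues x).
Proof.
split => [Sx|/forallP Sx l Sl]; first by apply/forallP => l; rewrite ffunE Sx ?fsvalP.
by have := Sx [` Sl]; rewrite ffunE.
Qed.

Local Notation w t := (fine (mu [set x | residues x = t]%classic)).

Lemma measure_sifted : mu S = (\sum_t (sifted t)%:R * w t)%:E.
Proof.
have S_ind : (fun x => (sifted (residues x))%:R) = \1_S :> (X -> R).
  apply: funext => x; rewrite indicE; congr (nat_of_bool _)%:R.
  by apply/idP/idP => [/sifted_residues/mem_set|/set_mem/sifted_residues].
have mS : measurable S.
  suff -> : S = [set x | sifted (residues x)]%classic.
    exact: measurable_preimage_fin measurable_residues_eq _.
  by apply/seteqP; split => x /sifted_residues.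
rewrite -(Rintegral_comp_fin mu_fin measurable_residues_eq) S_ind.
rewrite /Rintegral integral_indic // setIT.
by rewrite fineK // ge0_fin_numE // (le_lt_trans _ mu_fin) // le_measure ?inE.
Qed.

Definition sifted_indicator x : R[i] := ((sifted (residues x))%:R)%:C%C.

Lemma sq_integrable_sifted : sq_integrable mu sifted_indicator.
Proof.
split; first exact: (measurable_comp_fin mu_fin measurable_residues_eq (fun t => (sifted t)%:R)).
  exact: measurable_cst.
exact: (integrable_comp_fin mu_fin measurable_residues_eq (fun t => sqnorm ((sifted t)%:R%:C%C))).
Qed.

Lemma Rintegral_sqnorm_sifted :
  Rintegral mu setT (fun x => sqnorm (sifted_indicator x)) = \sum_t (sifted t)%:R * w t.
Proof.
rewrite (Rintegral_comp_fin mu_fin measurable_residues_eq (fun t => sqnorm ((sifted t)%:R%:C%C))).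
by apply: eq_bigr => t _; case: (sifted t); rewrite /sqnorm /=; ring.
Qed.

Context {nu : forall l, Yl l -> R} {Ib : Lam -> finType}.
Context {b : forall l, Ib l -> Yl l -> R[i]} {i0 : forall l, Ib l}.
Hypothesis nu_sum1 : forall l, \sum_(y : Yl l) nu l y = 1.
Hypothesis b_orthonormal : forall l i j, l2inner (nu l) (b l i) (b l j) = (i == j)%:R.
Hypothesis b_span : forall l (h : Yl l -> R[i]),
  exists c : Ib l -> R[i], forall y, h y = \sum_i c i * b l i y.
Hypothesis b_i0 : forall l y, b l (i0 l) y = 1.

Local Notation p l := (nu_of (nu l) (Omega l)).

Local Notation block_integral m phi := (cint mu (fun x =>
  sifted_indicator x * \prod_(l : m) b (fsval l) (phi l) (rho (fsval l) (F x)))).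

Lemma sieve_block {m : {fset Lam}} : m `<=` Lstar -> (forall l, l \in m -> p l < 1) ->
  (\sum_t (sifted t)%:R * w t) ^+ 2 * \prod_(l : m) (p (fsval l) / (1 - p (fsval l))) <=
  \sum_(phi : {dffun forall l : m, Ib (fsval l)} | [forall l, phi l != i0 (fsval l)])
    sqnorm (block_integral m phi).
Proof.
move=> mL p_lt1; have inL (l : m) : fsval l \in Lstar by apply/(fsubsetP mL)/fsvalP.
pose e (l : m) i (t : {dffun forall l : Lstar, Yl (fsval l)}) := b (fsval l) i (t [` inL l]).
have cintE (phi : {dffun forall l : m, Ib (fsval l)}) : block_integral m phi =
    \sum_t ((sifted t)%:R * w t)%:C%C * \prod_(l : m) e l (phi l) t.
  transitivity (\sum_t ((sifted t)%:R%:C%C * \prod_(l : m) e l (phi l) t) * (w t)%:C%C).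
    rewrite -(cint_comp_fin mu_fin measurable_residues_eq); congr cint; apply: funext => x /=.
    by congr (_ * _); apply: eq_bigr => l _; rewrite /e /residues ffunE.
  by apply: eq_bigr => t _; rewrite rmorphM; ring.
under [leRHS]eq_bigr do rewrite cintE.
pose c (l : m) i :=
  l2inner (nu (fsval l)) (sieve_fun (nu (fsval l)) (Omega (fsval l))) (b (fsval l) i).
apply: (sieve_block_ineq (fun l : m => i0 (fsval l)) c (fun l : m => p (fsval l)) e) => [l|l|l|t].
- exact: sieve_coef_i0.
- by rewrite sieve_coef_sqnorm.
- exact: p_lt1 (fsvalP l).
- rewrite mulf_eq0 negb_or pnatr_eq0 eqb0 negbK => /andP[sifted_t _] l.
  by apply: sieve_coef_expansion => //; have := forallP sifted_t [` inL l].
Qed.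

End sieve.

Lemma prod_sieve_ratio {R : realType} {T : choiceType} {m : {fset T}} {f : T -> R} :
  (forall l, l \in m -> f l < 1) ->
  (\prod_(l <- m) sieve_ratio (f l) = (\prod_(l : m) (f (fsval l) / (1 - f (fsval l))))%:E)%E.
Proof.
move=> f_lt1; rewrite -prodEFin big_seq_fsetE /=; apply: eq_bigr => l _.
by rewrite /sieve_ratio lt_eqF // f_lt1 ?fsvalP.
Qed.

Theorem proposition2p4
  (R : realType)
  (Y : Type) (Lam : choiceType)
  (Yl : Lam -> finType) (rho : forall l : Lam, Y -> Yl l)
  (rho_surj : forall (l : Lam) (z : Yl l), exists y : Y, rho l y = z)
  (d : measure_display) (X : measurableType d)
  (mu : {measure set X -> \bar R})
  (mu_fin : (mu setT < +oo)%E)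
  (F : X -> Y)
  (F_meas : forall (l : Lam) (y : Yl l), measurable [set x : X | rho l (F x) = y]%classic)
  (nu : forall l : Lam, Yl l -> R)
  (nu_pos : forall (l : Lam) (y : Yl l), 0 < nu l y)
  (nu_sum1 : forall l : Lam, \sum_(y : Yl l) nu l y = 1)
  (Ib : Lam -> finType) (b : forall l : Lam, Ib l -> Yl l -> R[i])
  (b_orthonormal : forall (l : Lam) (i j : Ib l),
      l2inner (nu l) (b l i) (b l j) = (i == j)%:R)
  (b_span : forall (l : Lam) (h : Yl l -> R[i]),
      exists c : Ib l -> R[i], forall y : Yl l, h y = \sum_(i : Ib l) c i * b l i y)
  (i0 : forall l : Lam, Ib l)
  (b_i0 : forall (l : Lam) (y : Yl l), b l (i0 l) y = 1)
  (Lstar : {fset Lam}) (L : {fset {fset Lam}})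
  (L_sub : forall m : {fset Lam}, m \in L -> m `<=` Lstar)
  (L_single : forall l : Lam, l \in Lstar -> [fset l] \in L)
  (Delta : R)
  (Delta_ge0 : 0 <= Delta)
  (Delta_ineq : forall alpha : X -> R[i], sq_integrable mu alpha ->
      \sum_(m <- L)
        \sum_(phi : {dffun forall l : m, Ib (fsval l)} | [forall l, phi l != i0 (fsval l)])
          sqnorm (cint mu (fun x => alpha x *
                     \prod_(l : m) b (fsval l) (phi l) (rho (fsval l) (F x))))
      <= Delta * Rintegral mu setT (fun x => sqnorm (alpha x)))
  (Delta_min : forall Delta' : R, 0 <= Delta' ->
      (forall alpha : X -> R[i], sq_integrable mu alpha ->
        \sum_(m <- L)
          \sum_(phi : {dffun forall l : m, Ib (fsval l)} | [forall l, phi l != i0 (fsval l)])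
            sqnorm (cint mu (fun x => alpha x *
                       \prod_(l : m) b (fsval l) (phi l) (rho (fsval l) (F x))))
        <= Delta' * Rintegral mu setT (fun x => sqnorm (alpha x))) ->
      Delta <= Delta')
  (Omega : forall l : Lam, {set Yl l}) :
  let S := [set x : X | forall l : Lam, l \in Lstar -> rho l (F x) \notin Omega l]%classic in
  let H := (\sum_(m <- L) \prod_(l <- m) sieve_ratio (nu_of (nu l) (Omega l)))%E in
  (mu S * H <= Delta%:E)%E.
Proof.
cbv zeta; set S := [set x : X | _]%classic; set H := (\sum_(m <- L) _)%E.
(* [0 * +oo = 0] in [\bar R], so this case needs no bound on [H]. *)
have [->|S_neq0] := eqVneq (mu S) 0%E; first by rewrite mul0e lee_fin.
have [x0 Sx0] : exists x, S x.
  by apply/set0P; apply: contra_neq S_neq0 => ->; apply: measure0.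
pose p l := nu_of (nu l) (Omega l).
have p_lt1 m : m \in L -> forall l, l \in m -> p l < 1.
  move=> Lm l /(fsubsetP (L_sub m Lm)) Ll.
  exact: nu_of_lt1 (nu_pos l) (nu_sum1 l) (Sx0 l Ll).
have -> : H = (\sum_(m <- L) \prod_(l : m) (p (fsval l) / (1 - p (fsval l))))%:E.
  rewrite /H -sumEFin big_seq [RHS]big_seq; apply: eq_bigr => m Lm.
  exact: prod_sieve_ratio (p_lt1 m Lm).
have muS := measure_sifted mu_fin F_meas Lstar Omega.
set s := \sum_t _ in muS.
have s_gt0 : 0 < s.
  rewrite lt0r -lee_fin -muS measure_ge0 andbT.
  by apply: contraNneq S_neq0 => s0; rewrite muS s0.
rewrite muS -EFinM lee_fin -(ler_pM2l s_gt0) mulrA -expr2 mulr_sumr [s * Delta]mulrC.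
have := Delta_ineq _ (sq_integrable_sifted mu_fin F_meas Lstar Omega).
rewrite Rintegral_sqnorm_sifted //; apply: le_trans.
rewrite big_seq [leRHS]big_seq; apply: ler_sum => m Lm.
apply: (sieve_block mu_fin F_meas Lstar Omega nu_sum1 b_orthonormal b_span b_i0 (L_sub m Lm)).
exact: p_lt1.
Qed.
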